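(* Let $q=2^m$, let $k\in\mathbb{F}_q$ with $Tr(k)=1$, let $i\in\mathbb{F}_{q^2}\setminus\mathbb{F}_q$ with $i^2=i+k$, and let $\alpha=A+iB$, $\beta=C+iD$ with $A,B,C,D\in\mathbb{F}_q$ and $\alpha\beta\neq 0$. Then the following are equivalent: (i) $m$ is odd, $C=A+B+1$, $D=B$, $A^2+AB+B^2k+B=0$, and $B\neq 0$; (ii) $\beta=\alpha^{q-1}\in\mathbb{F}_{q^2}\setminus\mathbb{F}_q$, $Tr\left(1+\frac{1}{\alpha^{q+1}}\right)=0$, and $\alpha+\alpha^q=\beta+\beta^q$.
   Context: $Tr:\mathbb{F}_q\to\mathbb{F}_2$ is the absolute trace $Tr(z)=z+z^2+\cdots+z^{2^{m-1}}$. *)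

From HB Require Import structures.
From mathcomp Require Import all_boot all_order all_algebra all_field.
Set Implicit Arguments. Unset Strict Implicit. Unset Printing Implicit Defensive.
Import GRing.Theory.
Local Open Scope ring_scope.

(* L plays the role of F_{q^2}, q = 2^m; F_q is the subfield {x | x^q = x}. *)
Definition inFq (L : finFieldType) (m : nat) (x : L) : bool := x ^+ (2 ^ m) == x.

Definition Tr (L : finFieldType) (m : nat) (z : L) : L :=
  \sum_(j < m) z ^+ (2 ^ j).

From HB Require Import structures.
From mathcomp Require Import all_boot all_order all_algebra all_field.
From mathcomp Require Import ring.
Set Implicit Arguments.
Unset Strict Implicit.
Unset Printing Implicit Defensive.

Import GRing.Theory.
Local Open Scope ring_scope.

(* Let sigma be the Frobenius z |-> z^q, the nontrivial automorphism of L over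
   F_q.  As i^q = i + 1, sigma (X + i Y) = X + i Y + Y, so z + sigma z = Y and
   the norm z^(q+1) is X^2 + X Y + k Y^2.  Thus the equation in (i) says
   N(alpha) = B = alpha + sigma alpha, which is equivalent to
   alpha^(q-1) = sigma alpha + 1 = (A + B + 1) + i B.  Conversely, for
   beta = alpha^(q-1) = sigma alpha / alpha one computes
   beta + sigma beta = (alpha + sigma alpha)^2 / N(alpha), so the condition
   D = B forces N(alpha) = B.  Finally, if N(alpha) = B then 1/B = t^2 + t + k
   with t = A/B in F_q, so Tr(1 + 1/B) = m + Tr(k) = m + 1 in F_2, which
   vanishes exactly when m is odd. *)

Section Char2.
Variable L : finFieldType.
Hypothesis char2 : 2 \in [pchar L].

Lemma exprD_pow2 n (x y : L) : (x + y) ^+ (2 ^ n) = x ^+ (2 ^ n) + y ^+ (2 ^ n).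
Proof. by apply: exprDn_pchar; rewrite pnatX (pnatE _ (isT : prime 2)) char2. Qed.

Lemma TrD m : {morph @Tr L m : x y / x + y}.
Proof.
by move=> x y; rewrite /Tr -big_split; apply: eq_bigr => j _; rewrite exprD_pow2.
Qed.

Lemma Tr1 m : Tr m (1 : L) = (odd m)%:R.
Proof.
rewrite /Tr (eq_bigr (fun=> 1)) => [|j _]; last by rewrite expr1n.
by rewrite sumr_const card_ord -(GRing.natr_mod_pchar char2) modn2.
Qed.

Lemma Tr_sqr_add m (t : L) : Tr m (t ^+ 2 + t) = t ^+ (2 ^ m) + t.
Proof.
rewrite /Tr (eq_bigr (fun j : 'I_m => t ^+ (2 ^ j.+1) - t ^+ (2 ^ j))) => [|j _].
  by rewrite -(big_mkord xpredT (fun j => t ^+ (2 ^ j.+1) - t ^+ (2 ^ j)))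
    telescope_sumr // expr1 (oppr_pchar2 char2).
by rewrite (oppr_pchar2 char2) exprD_pow2 -exprM expnS.
Qed.

Lemma Tr_1_addV m (k A B : L) : inFq m A -> inFq m B -> B != 0 ->
  Tr m k = 1 -> A ^+ 2 + A * B + B ^+ 2 * k = B ->
  Tr m (1 + B^-1) = (~~ odd m)%:R.
Proof.
move=> /eqP FqA /eqP FqB B0 Trk normB.
pose t := A / B.
have -> : B^-1 = t ^+ 2 + t + k.
  transitivity ((A ^+ 2 + A * B + B ^+ 2 * k) / B ^+ 2).
    by rewrite normB; field.
  by rewrite /t; field.
rewrite 2!TrD Tr1 Tr_sqr_add Trk /t exprMn exprVn FqA FqB addrr_pchar2 // add0r.
by case: (odd m); rewrite ?addrr_pchar2 ?add0r.
Qed.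

End Char2.

Lemma expr_subn1_eq (F : fieldType) (a : F) n : a != 0 -> (0 < n)%N ->
  a ^+ (n - 1) = a ^+ n - 1 <-> a ^+ (n + 1) = a ^+ n + a.
Proof.
move=> a0 n0.
have expr_n : a ^+ n = a ^+ (n - 1) * a by rewrite -exprSr subn1 prednK.
have expr_n1 : a ^+ (n + 1) = a ^+ n * a by rewrite addn1 exprSr.
split=> h.
  have := congr1 ( *%R^~ a) h; rewrite /= -expr_n mulrBl mul1r -expr_n1 => ->.
  by rewrite subrK.
by apply: (mulIf a0); rewrite -expr_n mulrBl mul1r -expr_n1 h addrK.
Qed.

Lemma expr_subn1_add_frob (F : fieldType) (a : F) n : 2 \in [pchar F] ->
  a != 0 -> (0 < n)%N -> a ^+ (n * n) = a ->
  a ^+ (n - 1) + a ^+ (n - 1) ^+ n = (a + a ^+ n) ^+ 2 / a ^+ (n + 1).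
Proof.
move=> char2 a0 n0 a_nn.
have an0 : a ^+ n != 0 by rewrite expf_neq0.
have -> : a ^+ (n - 1) = a ^+ n / a.
  by rewrite -[in RHS](subnK n0) addn1 exprSr mulfK.
rewrite expr_div_n -exprM a_nn addn1 [a ^+ n.+1]exprSr.
have two0 : 2 = 0 :> F := pcharf0 char2.
by field: two0; apply/andP.
Qed.

Section QuadraticExtension.
Variables (L : finFieldType) (m : nat) (k i : L).
Local Notation q := (2 ^ m)%N.
Hypotheses (card_L : #|L| = (q ^ 2)%N) (Fq_k : inFq m k).
Hypotheses (i_notin_Fq : ~~ inFq m i) (i_sqr : i ^+ 2 = i + k).

Lemma pchar_L : 2 \in [pchar L].
Proof. by apply: (card_finPcharP (n := (m * 2)%N)); rewrite ?card_L ?expnM. Qed.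

Let two0 : 2 = 0 :> L := pcharf0 pchar_L.

Lemma frob_i : i ^+ q = i + 1.
Proof.
have frob_root : (i ^+ q) ^+ 2 = i ^+ q + k.
  by rewrite -exprM mulnC exprM i_sqr exprD_pow2 ?pchar_L // (eqP Fq_k).
have : (i ^+ q + i) * (i ^+ q + (i + 1)) = 0.
  move: (i ^+ q) frob_root => j j_root.
  have -> : (j + i) * (j + (i + 1)) = j ^+ 2 + i ^+ 2 + j + i + 2 * (i * j) by ring.
  by rewrite j_root i_sqr; ring: two0.
move/eqP; rewrite mulf_eq0 !addr_eq0 !oppr_pchar2 ?pchar_L // => /orP[/eqP iq | /eqP //].
by move: i_notin_Fq; rewrite /inFq iq eqxx.
Qed.

Section Coordinates.
Variables X Y : L.
Hypotheses (Fq_X : inFq m X) (Fq_Y : inFq m Y).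
Local Notation z := (X + i * Y).

Lemma frob_coord : z ^+ q = z + Y.
Proof.
by rewrite exprD_pow2 ?pchar_L // exprMn frob_i (eqP Fq_X) (eqP Fq_Y) mulrDl mul1r addrA.
Qed.

Lemma add_frob_coord : z + z ^+ q = Y.
Proof. by rewrite frob_coord addrA addrr_pchar2 ?pchar_L ?add0r. Qed.

Lemma inFq_coord : inFq m z = (Y == 0).
Proof. by rewrite /inFq frob_coord -subr_eq0 addrC addKr. Qed.

Lemma norm_coord : z ^+ (q + 1) = X ^+ 2 + X * Y + Y ^+ 2 * k.
Proof.
rewrite exprD expr1 frob_coord.
have -> : (z + Y) * z = X ^+ 2 + X * Y + Y ^+ 2 * (i ^+ 2 + i) + 2 * (i * X * Y) by ring.
by rewrite i_sqr; ring: two0.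
Qed.

Lemma norm_coord_eqY : z ^+ (q + 1) = Y <-> X ^+ 2 + X * Y + Y ^+ 2 * k + Y = 0.
Proof.
rewrite norm_coord; split=> [-> | /eqP]; first exact: addrr_pchar2 pchar_L _.
by rewrite addr_eq0 (oppr_pchar2 pchar_L) => /eqP.
Qed.

Hypothesis z_neq0 : z != 0.

Lemma expr_subn1_coord : z ^+ (q - 1) = z ^+ q + 1 <-> z ^+ (q + 1) = Y.
Proof.
have q_gt0 : (0 < q)%N by rewrite expn_gt0.
have := @expr_subn1_eq _ z q z_neq0 q_gt0.
by rewrite (oppr_pchar2 pchar_L) [z ^+ q + z]addrC add_frob_coord.
Qed.

Lemma norm_eqY_of_tr : Y != 0 ->
  z ^+ (q - 1) + z ^+ (q - 1) ^+ q = Y -> z ^+ (q + 1) = Y.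
Proof.
move=> Y_neq0; rewrite expr_subn1_add_frob ?pchar_L ?expn_gt0 //; last first.
  by rewrite mulnn -card_L expf_card.
rewrite add_frob_coord => /(congr1 ( *%R^~ (z ^+ (q + 1)))).
by rewrite divfK ?expf_neq0 // expr2 => /(mulfI Y_neq0)/esym.
Qed.

End Coordinates.
End QuadraticExtension.

Theorem proposition6 (L : finFieldType) (m : nat)
  (hL : #|L| = ((2 ^ m) ^ 2)%N)
  (k i A B C D : L)
  (hk : inFq m k) (hTrk : Tr m k = 1)
  (hi : ~~ inFq m i) (hi2 : i ^+ 2 = i + k)
  (hA : inFq m A) (hB : inFq m B) (hC : inFq m C) (hD : inFq m D)
  (hab : (A + i * B) * (C + i * D) != 0) :
  let alpha := A + i * B in
  let beta := C + i * D in
  (odd m /\ C = A + B + 1 /\ D = B /\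
   A ^+ 2 + A * B + B ^+ 2 * k + B = 0 /\ B != 0)
  <->
  (beta = alpha ^+ (2 ^ m - 1) /\ ~~ inFq m beta /\
   Tr m (1 + (alpha ^+ (2 ^ m + 1))^-1) = 0 /\
   alpha + alpha ^+ (2 ^ m) = beta + beta ^+ (2 ^ m)).
Proof.
move=> alpha beta.
have char2 := pchar_L hL.
have [alpha_neq0 _] : alpha != 0 /\ beta != 0 by apply/andP; rewrite -negb_or -mulf_eq0.
have alpha_frob := frob_coord hL hk hi hi2 hA hB.
have alpha_tr := add_frob_coord hL hk hi hi2 hA hB.
have beta_tr := add_frob_coord hL hk hi hi2 hC hD.
have alpha_pred := expr_subn1_coord hL hk hi hi2 hA hB alpha_neq0.
have alpha_normP := norm_coord_eqY hL hk hi hi2 hA hB.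
have trace_alpha : alpha ^+ (2 ^ m + 1) = B -> B != 0 ->
    Tr m (1 + (alpha ^+ (2 ^ m + 1))^-1) = (~~ odd m)%:R.
  move=> NB B_neq0; rewrite NB (Tr_1_addV char2 hA hB B_neq0 hTrk) //.
  by rewrite -(norm_coord hL hk hi hi2 hA hB).
split.
- move=> [odd_m [C_eq [D_eq [/alpha_normP NB B_neq0]]]].
  have beta_eq : beta = alpha ^+ (2 ^ m) + 1.
    by rewrite alpha_frob /beta /alpha C_eq D_eq; ring.
  split; first by rewrite beta_eq; apply/esym/alpha_pred.
  split; first by rewrite /beta (inFq_coord hL hk hi hi2 hC hD) D_eq.
  split; first by rewrite trace_alpha // odd_m.
  by rewrite alpha_tr beta_tr D_eq.
- move=> [beta_eq [beta_notin_Fq [trace0 tr_eq]]].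
  have D_eq : D = B by rewrite -beta_tr -tr_eq alpha_tr.
  have B_neq0 : B != 0 by rewrite -D_eq -(inFq_coord hL hk hi hi2 hC hD).
  have NB : alpha ^+ (2 ^ m + 1) = B.
    by apply: (norm_eqY_of_tr hL hk hi hi2 hA hB) => //; rewrite -beta_eq beta_tr.
  have C_eq : C = A + B + 1.
    apply: (addIr (i * B)); move: beta_eq.
    by rewrite (proj2 alpha_pred NB) alpha_frob /beta /alpha D_eq => ->; ring.
  split.
    by move: trace0; rewrite trace_alpha //; case: (odd m) => //= /eqP; rewrite oner_eq0.
  by do 3!split=> //; apply/alpha_normP.
Qed.
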